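(* Let $p$ be a prime and $v$ an integer with $1<v<p-1$ and $p\not\equiv1\pmod v$. Then for every permutation $\pi$ of $\{1,\dots,p-1\}$, the sequence $\pi_v=(\pi(1)\,\%\,v,\dots,\pi(p-1)\,\%\,v)$ has least period $p-1$.
   Context: $x\,\%\,v$ denotes the least nonnegative remainder modulo $v$. The sequence of length $p-1$ is regarded cyclically; its least period is the smallest $\rho>0$ with $\pi_v(i+\rho)=\pi_v(i)$ for all indices $i$ modulo $p-1$. *)

From mathcomp Require Import all_boot all_fingroup.
Set Implicit Arguments. Unset Strict Implicit. Unset Printing Implicit Defensive.

(* A permutation of {1,...,n} is encoded as pi : {perm 'I_n}, with
   position k (1-based) corresponding to index k-1 and value (pi (k-1)).+1. *)

Definition pi_v (n : nat) (pi : {perm 'I_n}) (v : nat) : seq nat :=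
  [seq (val (pi i)).+1 %% v | i <- enum 'I_n].

Definition cyc_period (s : seq nat) (r : nat) : Prop :=
  forall i, i < size s -> nth 0 s ((i + r) %% size s) = nth 0 s i.

Definition least_period (s : seq nat) (r : nat) : Prop :=
  [/\ 0 < r, cyc_period s r & forall r', 0 < r' -> cyc_period s r' -> r <= r'].

(* A cyclic period r of a sequence of length n forces the period g = gcd(n, r),
   which divides n; the sequence is then n/g copies of its first g entries, so
   every value occurs a multiple of n/g times.  In pi_v the residues 1 and 0
   occur as often as they do among 1, ..., p-1, and since v does not divide
   p-1 the residue 1 occurs exactly once more than the residue 0.  Hence n/g
   divides two consecutive integers, so g = n. *)

From mathcomp Require Import all_boot all_fingroup.

Set Implicit Arguments.
Unset Strict Implicit.

Lemma count_iota_modn (P : pred nat) k g :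
  count (fun i => P (i %% g)) (iota 0 (k * g)) = k * count P (iota 0 g).
Proof.
elim: k => [|k IHk]; first by rewrite !mul0n.
rewrite mulSn addnC iotaD count_cat IHk add0n -[k * g]addn0 iotaDl count_map.
rewrite mulSn addnC; congr (_ + _); apply: eq_in_count => i.
by rewrite mem_iota => ltig /=; rewrite modnMDl modn_small.
Qed.

Section CyclicPeriod.

Variable s : seq nat.
Local Notation n := (size s).

Lemma cyc_periodM r k : cyc_period s r -> cyc_period s (k * r).
Proof.
move=> per_r i lt_in; elim: k => [|k IHk]; first by rewrite addn0 modn_small.
have n_gt0 : 0 < n by case: n lt_in.
by rewrite mulSn (addnC r) addnA -modnDml -IHk per_r // ltn_mod.
Qed.

Lemma cyc_period_gcd r : cyc_period s r -> cyc_period s (gcdn n r).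
Proof.
move=> per_r i lt_in; have n_gt0 : 0 < n by case: n lt_in.
have [a _ /dvdnP[b def_b]] := Bezoutl r n_gt0.
have lt_gn : (i + gcdn n r) %% n < n by rewrite ltn_mod.
rewrite -(cyc_periodM a per_r lt_gn) modnDml -addnA def_b.
by rewrite [i + _]addnC modnMDl modn_small.
Qed.

Lemma nth_cyc_period_modn g i :
  cyc_period s g -> i < n -> nth 0 s i = nth 0 s (i %% g).
Proof.
move=> per_g lt_in; have le_ig : i %% g <= i by apply: leq_mod.
rewrite -(cyc_periodM (i %/ g) per_g (leq_ltn_trans le_ig lt_in)).
by rewrite addnC -divn_eq modn_small.
Qed.

Lemma dvdn_count_mem_period g c :
  g %| n -> cyc_period s g -> n %/ g %| count_mem c s.
Proof.
move=> dvd_gn per_g; rewrite -[in count _ s](mkseq_nth 0 s) count_map.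
rewrite (@eq_in_count _ _ (fun i => nth 0 s (i %% g) == c)); last first.
  by move=> i; rewrite mem_iota /= => lt_in; rewrite -nth_cyc_period_modn.
rewrite -[in iota 0 _](divnK dvd_gn).
by rewrite (count_iota_modn (fun i => nth 0 s i == c)) dvdn_mulr.
Qed.

Lemma least_period_coprime_count a b :
  coprime (count_mem a s) (count_mem b s) -> least_period s n.
Proof.
move=> co_ab; have n_gt0 : 0 < n.
  by case: s co_ab => //; rewrite /coprime gcdn0 => /eqP.
split=> // [i lt_in|r r_gt0 per_r]; first by rewrite modnDr modn_small.
pose g := gcdn n r.
have dvd_gn : g %| n by apply: dvdn_gcdl.
have per_g : cyc_period s g by apply: cyc_period_gcd.
have : n %/ g %| 1.
  by rewrite -(eqP co_ab) dvdn_gcd !dvdn_count_mem_period.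
rewrite dvdn1 => /eqP ng1; rewrite -(divnK dvd_gn) ng1 mul1n.
by apply: dvdn_leq r_gt0 (dvdn_gcdr _ _).
Qed.

End CyclicPeriod.

Lemma perm_map_enum (T : finType) (f : {perm T}) : perm_eq (map f (enum T)) (enum T).
Proof.
have f_inj : injective f by apply: perm_inj.
apply: uniq_perm; rewrite ?(map_inj_uniq f_inj) ?enum_uniq // => x.
by rewrite mem_enum -(permKV f x) mem_map ?mem_enum.
Qed.

Lemma perm_pi_v n (pi : {perm 'I_n}) v :
  perm_eq (pi_v pi v) [seq x %% v | x <- iota 1 n].
Proof.
have -> : [seq x %% v | x <- iota 1 n] = [seq (val i).+1 %% v | i <- enum 'I_n].
  by rewrite -[1]addn0 iotaDl -val_enum_ord -!map_comp.
rewrite /pi_v (map_comp (fun i : 'I_n => (val i).+1 %% v) pi).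
exact: perm_map (perm_map_enum pi).
Qed.

Lemma modnS_eq1 v x : 1 < v -> (x.+1 %% v == 1) = (x %% v == 0).
Proof.
move=> v_gt1; have one_mod : 1 = (0 + 1) %% v by rewrite modn_small.
by rewrite [in LHS]one_mod -addn1 eqn_modDr mod0n.
Qed.

Lemma count_modn_eq1 v n : 1 < v -> ~~ (v %| n) ->
  count (fun x => x %% v == 1) (iota 1 n) =
  (count (fun x => x %% v == 0) (iota 1 n)).+1.
Proof.
case: n => [|m] v_gt1 ndvd; first by rewrite dvdn0 in ndvd.
have iota_last : iota 1 m.+1 = iota 1 m ++ [:: m.+1].
  by rewrite -[in LHS](addn1 m) iotaD.
rewrite [in RHS]iota_last count_cat /= -/(v %| m.+1) (negbTE ndvd) !addn0.
rewrite modn_small // eqxx add1n -[2]add1n iotaDl count_map.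
by congr S; apply: eq_count => x /=; rewrite add1n modnS_eq1.
Qed.

Theorem lemma1 (p v : nat) (pi : {perm 'I_(p.-1)}) :
  prime p -> 1 < v -> v < p.-1 -> ~ (p = 1 %[mod v]) ->
  least_period (pi_v pi v) p.-1.
Proof.
move=> p_pr v_gt1 _ p_ne1.
have def_p : p = p.-1.+1 by rewrite prednK ?prime_gt0.
have ndvd_v : ~~ (v %| p.-1).
  apply/negP => /dvdnP[k def_k]; apply: p_ne1.
  by rewrite def_p def_k -addn1 -modnDml modnMl.
have count_pi_v c :
    count_mem c (pi_v pi v) = count (fun x => x %% v == c) (iota 1 p.-1).
  by rewrite (seq.permP (perm_pi_v pi v)) count_map.
have coprime_counts : coprime (count_mem 0 (pi_v pi v)) (count_mem 1 (pi_v pi v)).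
  by rewrite !count_pi_v count_modn_eq1 // coprimenS.
have := least_period_coprime_count coprime_counts.
by rewrite size_map size_enum_ord.
Qed.
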